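(* With the sets $E_n$ defined in the context, there is a constant $c>0$ independent of $n$ such that for every $n\ge2$, $$\mathrm{Fav}(E_n)\ \ge\ c\Big(\sum_{k=1}^{n-1}a_k\Big)^{-1}.$$
   Context: Construction. Let $f:\mathbb{R}\to\mathbb{R}$ be $f(x)=0$ for $x\in[0,\tfrac12)+\mathbb{Z}$ and $f(x)=\tfrac34$ for $x\in[\tfrac12,1)+\mathbb{Z}$. Let $g:\mathbb{N}\to\mathbb{R}_+$ be strictly increasing with $g(k)\to\infty$, and set $a_1=g(1)$, $a_k=\min\{1,g(k)-g(k-1)\}$ for $k\ge2$. Let $(m_k)_{k\ge1}$ be positive integers with $m_k>m_{k-1}$, $1000\cdot4^{-m_k}\le a_k4^{-m_{k-1}}$ and $1000\cdot4^{-m_k}\le a_{k-1}4^{-m_{k-1}}$ for all $k\ge2$. For $n\ge1$ define $f_n:[0,1]\to\mathbb{R}$ by $f_n(x)=f(2x)+\sum_{j=1}^{n}a_j4^{-m_j}f(2\cdot4^{m_j}x)$, let $s_n=\{0\}\times[0,4^{-m_n}]$, and $E_n=\overline{s_n+\operatorname{graph}f_n}$ (Minkowski sum, closure). Favard length: $\mathrm{Fav}(E)=\frac{1}{|S^1|}\int_{S^1}|p_\theta(E)|\,d\theta$ with $p_\theta(x)=x\cdot\theta$. *)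

From Stdlib Require Import Reals Lra Lia ClassicalEpsilon.
Open Scope R_scope.

Definition fstep (x : R) : R := if Rlt_dec (frac_part x) (1/2) then 0 else 3/4.

(* a_1 = g 1, a_k = min(1, g k - g (k-1)) for k >= 2 (a 0 is unused) *)
Definition acoef (g : nat -> R) (k : nat) : R :=
  match k with
  | O => 0
  | S O => g 1%nat
  | S k' => Rmin 1 (g k - g k')
  end.

Definition fn (g : nat -> R) (m : nat -> nat) (n : nat) (x : R) : R :=
  fstep (2 * x) +
  sum_f_R0 (fun i => acoef g (S i) / 4 ^ (m (S i)) * fstep (2 * 4 ^ (m (S i)) * x)) (n - 1).

(* s_n + graph f_n, with graph over [0,1] *)
Definition preE (g : nat -> R) (m : nat -> nat) (n : nat) (p : R * R) : Prop :=
  exists x t, 0 <= x <= 1 /\ 0 <= t <= / 4 ^ (m n) /\ p = (x, fn g m n x + t).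

Definition closure2 (A : R * R -> Prop) (p : R * R) : Prop :=
  forall eps, 0 < eps -> exists q, A q /\ Rabs (fst q - fst p) < eps /\ Rabs (snd q - snd p) < eps.

Definition En (g : nat -> R) (m : nat -> nat) (n : nat) : R * R -> Prop :=
  closure2 (preE g m n).

Definition proj (E : R * R -> Prop) (th : R) (y : R) : Prop :=
  exists p, E p /\ y = fst p * cos th + snd p * sin th.

(* Lebesgue (outer) measure on R via countable covers by closed intervals *)
Definition cover_sum (A : R -> Prop) (s : R) : Prop :=
  exists a b : nat -> R, (forall i, a i <= b i) /\
    (forall x, A x -> exists i, a i <= x <= b i) /\
    Un_cv (fun N => sum_f_R0 (fun i => b i - a i) N) s.

Definition is_inf_cover (A : R -> Prop) (l : R) : Prop :=
  (forall s, cover_sum A s -> l <= s) /\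
  (forall l', (forall s, cover_sum A s -> l' <= s) -> l' <= l).

Definition leb_measure (A : R -> Prop) : R :=
  epsilon (inhabits 0) (is_inf_cover A).

From Stdlib Require Import Reals Lra Lia ZArith List Classical ClassicalEpsilon.
Open Scope R_scope.

(* For a direction th close to 0, the projection of E_n contains the projections of the
   horizontal pieces of the graph of the step function f_n, and consecutive pieces overlap or
   leave a gap of length sin th times the jump of f_n between them.  Hence
   |p_th(E_n)| >= cos th - sin th * Var(f_n), and Var(f_n) <= 3 + 3 sum_{k<=n} a_k since the
   k-th summand makes at most 4^(m_k+1) jumps of size (3/4) a_k 4^-m_k.  So |p_th(E_n)| >= 1/2
   on an interval of directions of length comparable to (sum_{k<n} a_k)^-1.  Integrability
   comes from p_th(E_n) being a finite union of intervals whose endpoints are Lipschitz in th,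
   which makes th |-> |p_th(E_n)| Lipschitz. *)

Lemma Rdiv_le_iff a b c : 0 < c -> (a / c <= b <-> a <= b * c).
Proof. intro Hc. replace a with (a / c * c) at 2 by (field; lra). split; nra. Qed.

Lemma Rle_div_iff a b c : 0 < c -> (a <= b / c <-> a * c <= b).
Proof. intro Hc. replace b with (b / c * c) at 2 by (field; lra). split; nra. Qed.

Lemma Rdiv_lt_iff a b c : 0 < c -> (a / c < b <-> a < b * c).
Proof. intro Hc. replace a with (a / c * c) at 2 by (field; lra). split; nra. Qed.

Lemma Rlt_div_iff a b c : 0 < c -> (a < b / c <-> a * c < b).
Proof. intro Hc. replace b with (b / c * c) at 2 by (field; lra). split; nra. Qed.

(** * Outer measure *)

Definition coverable (A : R -> Prop) : Prop := exists s, cover_sum A s.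

Lemma cover_sum_nonneg A s : cover_sum A s -> 0 <= s.
Proof.
  intros (a & b & Hab & _ & Hcv).
  assert (Hgrow : Un_growing (fun N => sum_f_R0 (fun i => b i - a i) N)).
  { intro n. simpl. specialize (Hab (S n)). lra. }
  pose proof (growing_ineq _ _ Hgrow Hcv 0%nat) as H0. simpl in H0.
  specialize (Hab 0%nat). lra.
Qed.

Lemma is_inf_cover_exists A : coverable A -> exists l, is_inf_cover A l.
Proof.
  intros [s0 Hs0].
  set (E := fun x => exists s, cover_sum A s /\ x = - s).
  assert (Hbound : bound E).
  { exists 0. intros x [s [Hs ->]]. pose proof (cover_sum_nonneg _ _ Hs). lra. }
  destruct (completeness E Hbound (ex_intro _ (- s0) (ex_intro _ s0 (conj Hs0 eq_refl))))
    as [M [HMub HMlub]].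
  exists (- M). split.
  - intros s Hs. assert (HE : E (- s)) by (exists s; auto). specialize (HMub _ HE). lra.
  - intros l' Hl'. enough (M <= - l') by lra.
    apply HMlub. intros x [s [Hs ->]]. specialize (Hl' s Hs). lra.
Qed.

Lemma leb_measure_spec A : coverable A -> is_inf_cover A (leb_measure A).
Proof. intro HA. unfold leb_measure. apply epsilon_spec, is_inf_cover_exists, HA. Qed.

Lemma leb_measure_le_cover A s : cover_sum A s -> leb_measure A <= s.
Proof. intro Hs. apply (proj1 (leb_measure_spec A (ex_intro _ s Hs))), Hs. Qed.

Lemma leb_measure_ge A l :
  coverable A -> (forall s, cover_sum A s -> l <= s) -> l <= leb_measure A.
Proof. intros HA Hl. apply (proj2 (leb_measure_spec A HA)), Hl. Qed.

Lemma leb_measure_nonneg A : coverable A -> 0 <= leb_measure A.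
Proof. intro HA. apply leb_measure_ge; auto. apply cover_sum_nonneg. Qed.

Lemma cover_sum_subset (A B : R -> Prop) s :
  (forall x, A x -> B x) -> cover_sum B s -> cover_sum A s.
Proof. intros HAB (a & b & H1 & H2 & H3). exists a, b. split; [|split]; auto. Qed.

Lemma cover_sum_empty : cover_sum (fun _ => False) 0.
Proof.
  exists (fun _ => 0), (fun _ => 0). split; [|split].
  - intros; lra.
  - intros ? [].
  - intros eps Heps. exists 0%nat. intros n _. unfold R_dist.
    rewrite (sum_eq _ (fun _ => 0)) by (intros; ring).
    rewrite sum_cte. rewrite Rmult_0_l, Rminus_0_r, Rabs_R0. exact Heps.
Qed.

Lemma cover_sum_add_interval A s a b : cover_sum A s -> a <= b ->
  cover_sum (fun x => A x \/ a <= x <= b) (s + (b - a)).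
Proof.
  intros (a0 & b0 & H1 & H2 & H3) Hab.
  exists (fun i => match i with O => a | S j => a0 j end),
         (fun i => match i with O => b | S j => b0 j end).
  split; [|split].
  - intros [|i]; auto.
  - intros x [Hx|Hx].
    + destruct (H2 x Hx) as [i Hi]. exists (S i). exact Hi.
    + exists 0%nat. exact Hx.
  - intros eps Heps. destruct (H3 eps Heps) as [N HN]. exists (S N).
    intros [|n] Hn; [lia|].
    rewrite decomp_sum by lia. simpl pred.
    specialize (HN n ltac:(lia)). unfold R_dist in *.
    replace (b - a + sum_f_R0 (fun i => b0 i - a0 i) n - (s + (b - a)))
      with (sum_f_R0 (fun i => b0 i - a0 i) n - s) by ring. exact HN.
Qed.

(** * Heine-Borel *)

Fixpoint total_length (l : list (R * R)) : R :=
  match l with nil => 0 | p :: l' => Rmax 0 (snd p - fst p) + total_length l' end.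

Lemma total_length_nonneg l : 0 <= total_length l.
Proof. induction l; simpl; [lra|]. pose proof (Rmax_l 0 (snd a - fst a)). lra. Qed.

Lemma total_length_app l1 l2 : total_length (l1 ++ l2) = total_length l1 + total_length l2.
Proof. induction l1; simpl; [lra|]. rewrite IHl1. ring. Qed.

Lemma total_length_map_seq (c d : nat -> R) n :
  total_length (map (fun i => (c i, d i)) (seq 0 (S n)))
  = sum_f_R0 (fun i => Rmax 0 (d i - c i)) n.
Proof.
  induction n; [simpl; ring|].
  rewrite seq_S, map_app, total_length_app, IHn, tech5. simpl. ring.
Qed.

(* Induction on the number of intervals: remove the one containing the left endpoint. *)
Lemma finite_open_cover_length l a b :
  (forall x, a <= x <= b -> exists p, In p l /\ fst p < x < snd p) ->
  b - a <= total_length l.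
Proof.
  remember (length l) as n eqn:Hlen. revert l a b Hlen.
  induction n as [n IH] using Wf_nat.lt_wf_ind; intros l a b Hlen Hcov.
  destruct (Rle_lt_dec a b) as [Hab|Hab].
  2:{ pose proof (total_length_nonneg l). lra. }
  destruct (Hcov a ltac:(lra)) as [[c d] [Hp Hcd]]. simpl in Hcd.
  destruct (in_split _ _ Hp) as [l1 [l2 ->]].
  rewrite total_length_app. simpl.
  pose proof (Rmax_r 0 (d - c)).
  pose proof (total_length_nonneg l1). pose proof (total_length_nonneg l2).
  destruct (Rlt_le_dec b d) as [Hbd|Hdb]; [lra|].
  assert (Hrest : b - d <= total_length (l1 ++ l2)).
  { eapply IH; [|reflexivity|].
    - rewrite Hlen, !length_app. simpl. lia.
    - intros x Hx. destruct (Hcov x ltac:(lra)) as [p' [Hp' Hx']].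
      exists p'. split; auto. apply in_app_or in Hp'. apply in_or_app.
      destruct Hp' as [Hq|[<-|Hq]]; auto. simpl in Hx'. lra. }
  rewrite total_length_app in Hrest. lra.
Qed.

(* The supremum of the points up to which [a, x] has a finite subcover is b. *)
Lemma segment_finite_subcover (c d : nat -> R) a b : a <= b ->
  (forall x, a <= x <= b -> exists i, c i < x < d i) ->
  exists n, forall x, a <= x <= b -> exists i, (i <= n)%nat /\ c i < x < d i.
Proof.
  intros Hab Hcov.
  set (Y := fun x => a <= x <= b /\ exists n, forall y, a <= y <= x ->
         exists i, (i <= n)%nat /\ c i < y < d i).
  assert (HYa : Y a).
  { split; [lra|]. destruct (Hcov a ltac:(lra)) as [i Hi]. exists i.
    intros y Hy. exists i. split; [lia|]. replace y with a by lra. exact Hi. }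
  assert (Hb : bound Y) by (exists b; intros x [Hx _]; lra).
  destruct (completeness Y Hb (ex_intro _ a HYa)) as [xs [Hub Hlub]].
  assert (Hxa : a <= xs) by (apply Hub; exact HYa).
  assert (Hxb : xs <= b) by (apply Hlub; intros x [Hx _]; lra).
  destruct (Hcov xs ltac:(lra)) as [j Hj].
  assert (Hy : exists y, Y y /\ c j < y).
  { apply NNPP. intro Hn. enough (xs <= c j) by lra.
    apply Hlub. intros x Hx. destruct (Rle_lt_dec x (c j)); auto.
    exfalso. apply Hn. exists x. auto. }
  destruct Hy as [y [[Hy1 [n Hn]] Hyc]].
  set (z := Rmin b ((xs + d j) / 2)).
  assert (Hz : Y z).
  { split.
    - unfold z. split; [apply Rmin_glb; lra|apply Rmin_l].
    - exists (Nat.max n j). intros w Hw.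
      destruct (Rle_lt_dec w y) as [Hwy|Hwy].
      + destruct (Hn w ltac:(lra)) as [i [Hi1 Hi2]]. exists i. split; [lia|auto].
      + exists j. split; [lia|]. split; [lra|].
        assert (z <= (xs + d j) / 2) by apply Rmin_r. lra. }
  assert (Hzb : z = b).
  { pose proof (Hub z Hz). unfold z in *. unfold Rmin in *.
    destruct (Rle_dec b ((xs + d j) / 2)); lra. }
  destruct Hz as [_ [n' Hn']]. rewrite Hzb in Hn'. exists n'. exact Hn'.
Qed.

Lemma sum_inv_pow2_succ n : sum_f_R0 (fun i => / 2 ^ S i) n = 1 - / 2 ^ S n.
Proof.
  induction n; [simpl; field|].
  rewrite tech5, IHn. assert (0 < 2 ^ S n) by (apply pow_lt; lra).
  replace (2 ^ S (S n)) with (2 * 2 ^ S n) by (simpl; ring). field. lra.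
Qed.

(* Heine–Borel: enlarge the i-th interval by eps/2^(i+2) and pass to a finite subcover. *)
Lemma interval_length_le_cover a b s :
  a <= b -> cover_sum (fun x => a <= x <= b) s -> b - a <= s.
Proof.
  intros Hab (a0 & b0 & Hle & Hcov & Hcv).
  assert (Heps : forall eps, 0 < eps -> b - a <= s + eps).
  { intros eps Heps.
    set (e := fun i : nat => eps / 2 ^ S (S i)).
    assert (He : forall i, 0 < e i)
      by (intro i; apply Rdiv_lt_0_compat; [lra|apply pow_lt; lra]).
    destruct (segment_finite_subcover (fun i => a0 i - e i) (fun i => b0 i + e i) a b Hab)
      as [n Hn].
    { intros x Hx. destruct (Hcov x Hx) as [i Hi]. exists i. specialize (He i). lra. }
    assert (Hfin : b - a <= sum_f_R0 (fun i => Rmax 0 (b0 i + e i - (a0 i - e i))) n).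
    { rewrite <- total_length_map_seq. apply finite_open_cover_length.
      intros x Hx. destruct (Hn x Hx) as [i [Hi1 Hi2]].
      exists (a0 i - e i, b0 i + e i). split; [|exact Hi2].
      apply (in_map (fun i => (a0 i - e i, b0 i + e i))), in_seq. lia. }
    assert (Henl : sum_f_R0 (fun i => Rmax 0 (b0 i + e i - (a0 i - e i))) n =
                   sum_f_R0 (fun i => b0 i - a0 i) n + eps * sum_f_R0 (fun i => / 2 ^ S i) n).
    { rewrite scal_sum, <- sum_plus. apply sum_eq. intros i _.
      rewrite Rmax_right by (specialize (Hle i); specialize (He i); lra).
      unfold e. simpl. field. apply pow_nonzero. lra. }
    rewrite Henl, sum_inv_pow2_succ in Hfin.
    assert (Hgrow : Un_growing (fun N => sum_f_R0 (fun i => b0 i - a0 i) N)).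
    { intro k. simpl. specialize (Hle (S k)). lra. }
    pose proof (growing_ineq _ _ Hgrow Hcv n).
    assert (0 < / 2 ^ S n) by (apply Rinv_0_lt_compat, pow_lt; lra).
    nra. }
  destruct (Rle_lt_dec (b - a) s); auto.
  specialize (Heps ((b - a - s) / 2) ltac:(lra)). lra.
Qed.

(** * The step function *)

Lemma frac_part_of_floor (y : R) (z : Z) : IZR z <= y < IZR z + 1 -> frac_part y = y - IZR z.
Proof.
  intros [H1 H2]. unfold frac_part, Int_part.
  replace (up y) with (z + 1)%Z by (apply tech_up; rewrite plus_IZR; lra).
  now replace (z + 1 - 1)%Z with z by ring.
Qed.

Lemma fstep_lower_half (y : R) (t : nat) : INR t <= y < INR t + 1/2 -> fstep y = 0.
Proof.
  intros H. unfold fstep. rewrite INR_IZR_INZ in H.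
  rewrite (frac_part_of_floor y (Z.of_nat t)) by lra.
  destruct (Rlt_dec _ _); lra.
Qed.

Lemma fstep_upper_half (y : R) (t : nat) : INR t + 1/2 <= y < INR t + 1 -> fstep y = 3/4.
Proof.
  intros H. unfold fstep. rewrite INR_IZR_INZ in H.
  rewrite (frac_part_of_floor y (Z.of_nat t)) by lra.
  destruct (Rlt_dec _ _); lra.
Qed.

(* Value of [fstep (2 * 4^e * x)] on the k-th cell [k/4^(M+1), (k+1)/4^(M+1)), for e <= M:
   it is governed by the parity of the index of the 4^(e+1)-adic cell containing it. *)
Definition cell_value (M e k : nat) : R := if Nat.odd (k / 4 ^ (M - e)) then 3/4 else 0.

Lemma INR_pow4 n : INR (4 ^ n) = 4 ^ n.
Proof. rewrite pow_INR. f_equal. simpl. ring. Qed.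

Lemma fstep_on_cell M e k x : (e <= M)%nat ->
  INR k / 4 ^ (S M) <= x < (INR k + 1) / 4 ^ (S M) ->
  fstep (2 * 4 ^ e * x) = cell_value M e k.
Proof.
  intros HeM Hx.
  set (q := (4 ^ (M - e))%nat). set (u := (k / q)%nat). set (v := (k mod q)%nat).
  assert (Hq0 : (q <> 0)%nat) by (apply Nat.pow_nonzero; lia).
  assert (Hk : k = (q * u + v)%nat) by apply Nat.div_mod_eq.
  assert (Hv : (v < q)%nat) by (apply Nat.mod_upper_bound; auto).
  assert (Hcell : 4 ^ S M = 4 ^ S e * INR q).
  { unfold q. rewrite INR_pow4, <- pow_add. f_equal. lia. }
  assert (Hpe : 0 < 4 ^ S e) by (apply pow_lt; lra).
  assert (HqR : 1 <= INR q) by (apply (le_INR 1); lia).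
  assert (Hkr : INR k = INR q * INR u + INR v) by (rewrite Hk, plus_INR, mult_INR; auto).
  assert (Hvr : INR v + 1 <= INR q) by (rewrite <- S_INR; apply le_INR; lia).
  assert (Hv0 : 0 <= INR v) by apply pos_INR.
  rewrite Hcell in Hx.
  set (z := 4 ^ S e * x).
  assert (Hz : INR u <= z < INR u + 1).
  { assert (HP : 0 < 4 ^ S e * INR q) by nra.
    destruct Hx as [Hx1 Hx2].
    apply Rdiv_le_iff in Hx1; [|exact HP]. apply Rlt_div_iff in Hx2; [|exact HP].
    replace (x * (4 ^ S e * INR q)) with (z * INR q) in Hx1, Hx2 by (unfold z; ring).
    split; nra. }
  replace (2 * 4 ^ e * x) with (z / 2) by (unfold z; simpl; field).
  unfold cell_value. fold q u.
  destruct (Nat.Even_or_Odd u) as [[t Ht]|[t Ht]].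
  - replace (Nat.odd u) with false by (rewrite Ht, Nat.odd_mul; reflexivity).
    apply (fstep_lower_half _ t). rewrite Ht, mult_INR in Hz. simpl in Hz. lra.
  - replace (Nat.odd u) with true by (symmetry; apply Nat.odd_spec; exists t; exact Ht).
    apply (fstep_upper_half _ t). rewrite Ht, plus_INR, mult_INR in Hz. simpl in Hz. lra.
Qed.

(** * Projections of rectangles *)

(* The projection of [x0, x0 + w] x [y0, y0 + h] onto direction th is
   [rect_support (Rmin 0) .., rect_support (Rmax 0) ..]. *)
Definition rect_support (G : R -> R) (x0 w y0 h th : R) : R :=
  x0 * cos th + y0 * sin th + G (w * cos th) + G (h * sin th).

Definition rect_lo := rect_support (Rmin 0).
Definition rect_hi := rect_support (Rmax 0).

Lemma rect_lo_le_hi x0 w y0 h th : rect_lo x0 w y0 h th <= rect_hi x0 w y0 h th.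
Proof.
  unfold rect_lo, rect_hi, rect_support.
  pose proof (Rmin_l 0 (w * cos th)). pose proof (Rmax_l 0 (w * cos th)).
  pose proof (Rmin_l 0 (h * sin th)). pose proof (Rmax_l 0 (h * sin th)). lra.
Qed.

Lemma segment_proj_bounds a w c : 0 <= a <= w -> Rmin 0 (w * c) <= a * c <= Rmax 0 (w * c).
Proof.
  intros Ha. unfold Rmin, Rmax.
  destruct (Rle_dec 0 (w * c)); destruct (Rle_dec 0 c); split; nra.
Qed.

Lemma rect_proj_bounds x0 w y0 h th x v : x0 <= x <= x0 + w -> y0 <= v <= y0 + h ->
  rect_lo x0 w y0 h th <= x * cos th + v * sin th <= rect_hi x0 w y0 h th.
Proof.
  intros Hx Hv. unfold rect_lo, rect_hi, rect_support.
  pose proof (segment_proj_bounds (x - x0) w (cos th) ltac:(lra)).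
  pose proof (segment_proj_bounds (v - y0) h (sin th) ltac:(lra)).
  replace (x * cos th) with (x0 * cos th + (x - x0) * cos th) by ring.
  replace (v * sin th) with (y0 * sin th + (v - y0) * sin th) by ring.
  lra.
Qed.

Lemma segment_proj_point w c s : 0 <= w -> 0 < s < 1 ->
  exists a, 0 <= a /\ (a < w \/ a = 0) /\
    a * c = Rmin 0 (w * c) + s * (Rmax 0 (w * c) - Rmin 0 (w * c)).
Proof.
  intros Hw Hs. unfold Rmin, Rmax. destruct (Rle_dec 0 c).
  - exists (s * w). destruct (Rle_dec 0 (w * c)); [|nra].
    split; [nra|]. split; [|ring].
    destruct (Req_dec w 0); [right; subst; ring|left; nra].
  - exists ((1 - s) * w). destruct (Rle_dec 0 (w * c)).
    + assert (w = 0) by nra. subst. split; [lra|]. split; [right; ring|ring].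
    + split; [nra|]. split; [left; nra|ring].
Qed.

(* The point realising an interior value lies off the right edge unless w = 0: the right
   edge of a cell belongs to the next cell. *)
Lemma rect_proj_interior x0 w y0 h th y : 0 <= w -> 0 <= h ->
  rect_lo x0 w y0 h th < y < rect_hi x0 w y0 h th ->
  exists x v, x0 <= x /\ (x < x0 + w \/ x = x0) /\ y0 <= v <= y0 + h /\
    y = x * cos th + v * sin th.
Proof.
  intros Hw Hh Hy.
  set (lo := rect_lo x0 w y0 h th) in *. set (hi := rect_hi x0 w y0 h th) in *.
  set (s := (y - lo) / (hi - lo)).
  assert (Hs : 0 < s < 1).
  { unfold s. split; [apply Rdiv_lt_0_compat; lra|]. apply Rdiv_lt_iff; lra. }
  assert (Hys : y = lo + s * (hi - lo)) by (unfold s; field; lra).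
  destruct (segment_proj_point w (cos th) s Hw Hs) as [a [Ha1 [Ha2 Ha3]]].
  destruct (segment_proj_point h (sin th) s Hh Hs) as [b [Hb1 [Hb2 Hb3]]].
  exists (x0 + a), (y0 + b). split; [lra|]. split; [destruct Ha2; lra|].
  split; [destruct Hb2; lra|].
  rewrite Hys. unfold lo, hi, rect_lo, rect_hi, rect_support.
  replace ((x0 + a) * cos th + (y0 + b) * sin th)
    with (x0 * cos th + y0 * sin th + a * cos th + b * sin th) by ring.
  rewrite Ha3, Hb3. ring.
Qed.

Lemma Rabs_sin_le z : Rabs (sin z) <= Rabs z.
Proof.
  assert (Hpos : forall y, 0 <= y -> Rabs (sin y) <= y).
  { intros y Hy. destruct (Req_dec y 0) as [->|Hy0]; [rewrite sin_0, Rabs_R0; lra|].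
    pose proof (sin_lt_x y ltac:(lra)). pose proof (SIN_bound y).
    destruct (Rle_lt_dec y 1).
    - assert (0 <= sin y) by (apply sin_ge_0; pose proof PI2_3_2; lra).
      rewrite Rabs_right; lra.
    - apply Rabs_le. lra. }
  destruct (Rle_lt_dec 0 z).
  - rewrite (Rabs_right z) by lra. auto.
  - rewrite (Rabs_left z), <- (Ropp_involutive z), sin_neg, Rabs_Ropp by lra.
    rewrite Ropp_involutive. apply Hpos. lra.
Qed.

Lemma small_angle_bounds th : 0 < th <= 1/2 -> 3/4 <= cos th /\ 0 <= sin th <= th.
Proof.
  intros Hth. pose proof PI2_3_2.
  assert (Hsin2 : Rabs (sin (th / 2)) <= th / 2)
    by (rewrite <- (Rabs_right (th / 2)) at 2 by lra; apply Rabs_sin_le).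
  assert (sin (th / 2) * sin (th / 2) <= th / 2 * (th / 2)).
  { replace (sin (th / 2) * sin (th / 2)) with (Rabs (sin (th / 2)) * Rabs (sin (th / 2)))
      by (rewrite <- Rabs_mult; apply Rabs_right, Rle_ge, Rle_0_sqr).
    pose proof (Rabs_pos (sin (th / 2))). nra. }
  replace th with (2 * (th / 2)) at 1 by field. rewrite cos_2a_sin.
  split; [nra|]. split; [apply sin_ge_0; lra|left; apply sin_lt_x; lra].
Qed.

Lemma cos_lipschitz a b : Rabs (cos a - cos b) <= Rabs (a - b).
Proof.
  rewrite form2, !Rabs_mult.
  pose proof (Rabs_sin_le ((a - b) / 2)). pose proof (SIN_bound ((a + b) / 2)).
  assert (Rabs (sin ((a + b) / 2)) <= 1) by (apply Rabs_le; lra).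
  replace (Rabs ((a - b) / 2)) with (Rabs (a - b) / 2) in H
    by (unfold Rdiv; rewrite Rabs_mult, (Rabs_right (/ 2)) by lra; reflexivity).
  replace (Rabs (-2)) with 2 by (rewrite Rabs_left; lra).
  pose proof (Rabs_pos (sin ((a - b) / 2))). pose proof (Rabs_pos (sin ((a + b) / 2))). nra.
Qed.

Lemma sin_lipschitz a b : Rabs (sin a - sin b) <= Rabs (a - b).
Proof.
  rewrite form4, !Rabs_mult.
  pose proof (Rabs_sin_le ((a - b) / 2)). pose proof (COS_bound ((a + b) / 2)).
  assert (Rabs (cos ((a + b) / 2)) <= 1) by (apply Rabs_le; lra).
  replace (Rabs ((a - b) / 2)) with (Rabs (a - b) / 2) in H
    by (unfold Rdiv; rewrite Rabs_mult, (Rabs_right (/ 2)) by lra; reflexivity).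
  replace (Rabs 2) with 2 by (rewrite Rabs_right; lra).
  pose proof (Rabs_pos (sin ((a - b) / 2))). pose proof (Rabs_pos (cos ((a + b) / 2))). nra.
Qed.

Lemma Rmin0_lipschitz a b : Rabs (Rmin 0 a - Rmin 0 b) <= Rabs (a - b).
Proof.
  unfold Rmin. destruct (Rle_dec 0 a); destruct (Rle_dec 0 b);
  unfold Rabs; repeat destruct (Rcase_abs _); lra.
Qed.

Lemma Rmax0_lipschitz a b : Rabs (Rmax 0 a - Rmax 0 b) <= Rabs (a - b).
Proof.
  unfold Rmax. destruct (Rle_dec 0 a); destruct (Rle_dec 0 b);
  unfold Rabs; repeat destruct (Rcase_abs _); lra.
Qed.

Lemma rect_support_lipschitz (G : R -> R) x0 w y0 h a b :
  (forall u v, Rabs (G u - G v) <= Rabs (u - v)) ->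
  Rabs (rect_support G x0 w y0 h a - rect_support G x0 w y0 h b)
  <= (Rabs x0 + Rabs w + Rabs y0 + Rabs h) * Rabs (a - b).
Proof.
  intros HG. unfold rect_support.
  pose proof (HG (w * cos a) (w * cos b)) as Hw. pose proof (HG (h * sin a) (h * sin b)) as Hh.
  pose proof (cos_lipschitz a b). pose proof (sin_lipschitz a b).
  rewrite <- Rmult_minus_distr_l, Rabs_mult in Hw, Hh.
  replace (x0 * cos a + y0 * sin a + G (w * cos a) + G (h * sin a) -
           (x0 * cos b + y0 * sin b + G (w * cos b) + G (h * sin b)))
    with (x0 * (cos a - cos b) + y0 * (sin a - sin b) + (G (w * cos a) - G (w * cos b))
          + (G (h * sin a) - G (h * sin b))) by ring.
  eapply Rle_trans; [apply Rabs_triang|]. eapply Rle_trans; [apply Rplus_le_compat_r, Rabs_triang|].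
  eapply Rle_trans; [apply Rplus_le_compat_r, Rplus_le_compat_r, Rabs_triang|].
  rewrite !Rabs_mult.
  pose proof (Rabs_pos x0). pose proof (Rabs_pos y0). pose proof (Rabs_pos w). pose proof (Rabs_pos h).
  nra.
Qed.

(** * Finite unions of intervals *)

Definition interval_union (lo hi : nat -> R) (K : nat) (y : R) : Prop :=
  exists k, (k <= K)%nat /\ lo k <= y <= hi k.

Lemma interval_union_0 lo hi y : interval_union lo hi 0 y <-> lo 0%nat <= y <= hi 0%nat.
Proof.
  split; [intros [k [Hk Hy]]; replace k with 0%nat in Hy by lia; exact Hy|].
  intro Hy. exists 0%nat. split; [lia|exact Hy].
Qed.

Lemma interval_union_S lo hi K y :
  interval_union lo hi (S K) y <-> interval_union lo hi K y \/ lo (S K) <= y <= hi (S K).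
Proof.
  split.
  - intros [k [Hk Hy]]. destruct (Nat.eq_dec k (S K)) as [->|Hne]; [right; exact Hy|].
    left. exists k. split; [lia|exact Hy].
  - intros [[k [Hk Hy]]|Hy]; [exists k|exists (S K)]; split; auto.
Qed.

Lemma interval_complement_open a b y : ~ (a <= y <= b) ->
  exists d, 0 < d /\ forall z, Rabs (z - y) < d -> ~ (a <= z <= b).
Proof.
  intro Hy. destruct (Rlt_le_dec y a).
  - exists (a - y). split; [lra|]. intros z Hz Hzab. apply Rabs_def2 in Hz. lra.
  - assert (b < y) by (destruct (Rle_lt_dec y b); [exfalso; apply Hy; lra|lra]).
    exists (y - b). split; [lra|]. intros z Hz Hzab. apply Rabs_def2 in Hz. lra.
Qed.

Lemma interval_union_complement_open lo hi K y : ~ interval_union lo hi K y ->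
  exists d, 0 < d /\ forall z, Rabs (z - y) < d -> ~ interval_union lo hi K z.
Proof.
  induction K as [|K IHK]; intro Hy.
  - rewrite interval_union_0 in Hy.
    destruct (interval_complement_open _ _ _ Hy) as [d [Hd Hz]].
    exists d. split; [exact Hd|]. intros z Hzy. rewrite interval_union_0. auto.
  - rewrite interval_union_S in Hy.
    destruct (IHK (fun H => Hy (or_introl H))) as [d1 [Hd1 H1]].
    destruct (interval_complement_open (lo (S K)) (hi (S K)) y (fun H => Hy (or_intror H)))
      as [d2 [Hd2 H2]].
    exists (Rmin d1 d2). split; [apply Rmin_glb_lt; auto|].
    intros z Hz. pose proof (Rmin_l d1 d2). pose proof (Rmin_r d1 d2).
    rewrite interval_union_S. intros [Hz'|Hz']; [apply (H1 z)|apply (H2 z)]; auto; lra.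
Qed.

Lemma proj_closure2_interval_union (A : R * R -> Prop) lo hi K th y :
  (forall p, A p -> interval_union lo hi K (fst p * cos th + snd p * sin th)) ->
  proj (closure2 A) th y -> interval_union lo hi K y.
Proof.
  intros HA [p [Hp ->]]. apply NNPP. intro Hn.
  destruct (interval_union_complement_open _ _ _ _ Hn) as [d [Hd Hfar]].
  destruct (Hp (d / 2) ltac:(lra)) as [q [Hq [H1 H2]]].
  apply (Hfar (fst q * cos th + snd q * sin th)); auto.
  replace (fst q * cos th + snd q * sin th - (fst p * cos th + snd p * sin th))
    with ((fst q - fst p) * cos th + (snd q - snd p) * sin th) by ring.
  eapply Rle_lt_trans; [apply Rabs_triang|]. rewrite !Rabs_mult.
  pose proof (COS_bound th). pose proof (SIN_bound th).
  assert (Rabs (cos th) <= 1) by (apply Rabs_le; lra).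
  assert (Rabs (sin th) <= 1) by (apply Rabs_le; lra).
  pose proof (Rabs_pos (fst q - fst p)). pose proof (Rabs_pos (snd q - snd p)).
  nra.
Qed.

Lemma cover_sum_add_interval_union A s lo hi K :
  cover_sum A s -> (forall k, lo k <= hi k) ->
  cover_sum (fun x => A x \/ interval_union lo hi K x) (s + sum_f_R0 (fun k => hi k - lo k) K).
Proof.
  intros HA Hle. induction K as [|K IHK]; simpl.
  - eapply cover_sum_subset; [|exact (cover_sum_add_interval _ _ _ _ HA (Hle 0%nat))].
    intros x [Hx|Hx]; [left; exact Hx|right; apply interval_union_0, Hx].
  - rewrite <- Rplus_assoc.
    eapply cover_sum_subset; [|exact (cover_sum_add_interval _ _ _ _ IHK (Hle (S K)))].
    intros x [Hx|Hx]; [left; left; exact Hx|].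
    apply interval_union_S in Hx. destruct Hx; [left; right|right]; assumption.
Qed.

Lemma Rabs_le_bounds x a : Rabs x <= a -> - a <= x <= a.
Proof. unfold Rabs. destruct (Rcase_abs x); lra. Qed.

(* Points of A outside B lie within dl of an endpoint of one of the K+1 intervals. *)
Lemma leb_measure_le_perturbed (A B : R -> Prop) lo hi lo' hi' K dl :
  0 <= dl ->
  (forall y, A y -> interval_union lo hi K y) ->
  (forall k y, (k <= K)%nat -> lo' k < y < hi' k -> B y) ->
  (forall k, (k <= K)%nat -> Rabs (lo k - lo' k) <= dl /\ Rabs (hi k - hi' k) <= dl) ->
  coverable B ->
  leb_measure A <= leb_measure B + INR (S K) * (4 * dl).
Proof.
  intros Hdl HA HB Hclose HcB.
  enough (leb_measure A - INR (S K) * (4 * dl) <= leb_measure B) by lra.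
  apply leb_measure_ge; [exact HcB|]. intros s Hs.
  pose proof (cover_sum_add_interval_union _ _ (fun k => hi' k - dl) (fun k => hi' k + dl) K
    (cover_sum_add_interval_union _ _ (fun k => lo' k - dl) (fun k => lo' k + dl) K Hs
       ltac:(intro; lra)) ltac:(intro; lra)) as Hcov.
  rewrite (sum_eq _ (fun _ => 2 * dl)), (sum_eq (fun k => hi' k + dl - (hi' k - dl)) (fun _ => 2 * dl)),
    sum_cte in Hcov by (intros; ring).
  enough (leb_measure A <= s + 2 * dl * INR (S K) + 2 * dl * INR (S K)) by lra.
  apply leb_measure_le_cover. eapply cover_sum_subset; [|exact Hcov].
  intros y Hy. destruct (HA y Hy) as [k [Hk Hyk]].
  destruct (Hclose k Hk) as [H1 H2]. apply Rabs_le_bounds in H1. apply Rabs_le_bounds in H2.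
  destruct (Rle_lt_dec y (lo' k)); [left; right; exists k; split; [exact Hk|lra]|].
  destruct (Rle_lt_dec (hi' k) y); [right; exists k; split; [exact Hk|lra]|].
  left; left. apply (HB k y Hk). lra.
Qed.

Lemma lipschitz_continuity_pt f L x :
  0 <= L -> (forall a b, Rabs (f a - f b) <= L * Rabs (a - b)) -> continuity_pt f x.
Proof.
  intros HL Hf eps Heps. exists (eps / (L + 1)). split; [apply Rdiv_lt_0_compat; lra|].
  intros y [_ Hy]. simpl in *. unfold R_dist in *.
  apply Rlt_div_iff in Hy; [|lra].
  eapply Rle_lt_trans; [apply Hf|]. pose proof (Rabs_pos (y - x)). nra.
Qed.

Lemma sum_telescope (w : nat -> R) K : sum_f_R0 (fun k => w (S k) - w k) K = w (S K) - w 0%nat.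
Proof. induction K; [simpl; ring|]. rewrite tech5, IHK. ring. Qed.

Lemma sum_f_R0_swap (f : nat -> nat -> R) K I :
  sum_f_R0 (fun k => sum_f_R0 (fun i => f i k) I) K
  = sum_f_R0 (fun i => sum_f_R0 (fun k => f i k) K) I.
Proof.
  induction K; [simpl; apply sum_eq; reflexivity|].
  rewrite tech5, IHK, <- sum_plus. apply sum_eq. intros. rewrite tech5. reflexivity.
Qed.

Lemma chain_cover (p q : nat -> R) K y : p 0%nat <= y <= q K ->
  (exists k, (k <= K)%nat /\ p k <= y < q k) \/
  (exists k, (k <= K)%nat /\ Rmin (q k) (p (S k)) <= y <= Rmax (q k) (p (S k))).
Proof.
  induction K as [|K IHK]; intros Hy.
  - destruct (Rlt_le_dec y (q 0%nat)).
    + left. exists 0%nat. split; [lia|lra].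
    + right. exists 0%nat. split; [lia|]. replace y with (q 0%nat) by lra.
      split; [apply Rmin_l|apply Rmax_l].
  - destruct (Rle_lt_dec y (q K)).
    + destruct (IHK ltac:(lra)) as [[k [Hk H]]|[k [Hk H]]]; [left|right];
        exists k; split; [lia|exact H| lia|exact H].
    + destruct (Rle_lt_dec (p (S K)) y).
      * destruct (Rlt_le_dec y (q (S K))).
        -- left. exists (S K). split; [lia|lra].
        -- right. exists (S K). split; [lia|]. replace y with (q (S K)) by lra.
           split; [apply Rmin_l|apply Rmax_l].
      * right. exists K. split; [lia|].
        split; [eapply Rle_trans; [apply Rmin_l|lra]|eapply Rle_trans; [|apply Rmax_r]; lra].
Qed.

(** * Projections of E_n *)

Section ProjectionsOfEn.

Variables (g : nat -> R) (m : nat -> nat) (n : nat).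

Hypothesis m_le_m_n : forall i, (i <= n - 1)%nat -> (m (S i) <= m n)%nat.

Definition coef (i : nat) : R := acoef g (S i) / 4 ^ m (S i).

(* On the cells of length 4^-(m n + 1), f_n is constant: this is its value on cell k. *)
Definition height (k : nat) : R :=
  cell_value (m n) 0 k + sum_f_R0 (fun i => coef i * cell_value (m n) (m (S i)) k) (n - 1).

Definition ncells : nat := 4 ^ S (m n).

Definition cell_left (k : nat) : R := INR k / INR ncells.

(* The extra degenerate cell k = ncells carries the point x = 1. *)
Definition cell_width (k : nat) : R := if Nat.ltb k ncells then / INR ncells else 0.

Definition thickness : R := / 4 ^ m n.

Definition piece_lo (th : R) (k : nat) : R :=
  rect_lo (cell_left k) (cell_width k) (height k) thickness th.

Definition piece_hi (th : R) (k : nat) : R :=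
  rect_hi (cell_left k) (cell_width k) (height k) thickness th.

Definition proj_length (th : R) : R := leb_measure (proj (En g m n) th).

Lemma ncells_pos : 0 < INR ncells.
Proof. unfold ncells. rewrite INR_pow4. apply pow_lt. lra. Qed.

Lemma ncells_ge1 : 1 <= INR ncells.
Proof. unfold ncells. rewrite INR_pow4. apply pow_R1_Rle. lra. Qed.

Lemma thickness_pos : 0 < thickness.
Proof. apply Rinv_0_lt_compat, pow_lt. lra. Qed.

Lemma cell_width_nonneg k : 0 <= cell_width k.
Proof.
  unfold cell_width. destruct (Nat.ltb _ _); [|lra].
  left. apply Rinv_0_lt_compat, ncells_pos.
Qed.

Lemma cell_left_nonneg k : 0 <= cell_left k.
Proof. apply Rle_div_iff; [exact ncells_pos|]. rewrite Rmult_0_l. apply pos_INR. Qed.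

Lemma fn_eq_height k x : cell_left k <= x < (INR k + 1) / INR ncells -> fn g m n x = height k.
Proof.
  unfold cell_left, ncells. rewrite INR_pow4. intros Hx. unfold fn, height.
  replace (2 * x) with (2 * 4 ^ 0 * x) by (simpl; ring).
  rewrite (fstep_on_cell (m n) 0 k x) by (auto; lia). f_equal.
  apply sum_eq. intros i Hi. unfold coef. rewrite (fstep_on_cell (m n) (m (S i)) k x); auto.
Qed.

Lemma cell_of_point x : 0 <= x <= 1 ->
  exists k, (k <= ncells)%nat /\ cell_left k <= x < (INR k + 1) / INR ncells /\
            x <= cell_left k + cell_width k.
Proof.
  intros Hx. pose proof ncells_pos as HN.
  destruct (base_Int_part (x * INR ncells)) as [Hi1 Hi2].
  assert (Hi : (0 <= Int_part (x * INR ncells))%Z).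
  { assert (IZR (-1) < IZR (Int_part (x * INR ncells))) by nra. apply lt_IZR in H. lia. }
  set (k := Z.to_nat (Int_part (x * INR ncells))).
  assert (Hk : INR k <= x * INR ncells < INR k + 1)
    by (unfold k; rewrite INR_IZR_INZ, Z2Nat.id by exact Hi; lra).
  assert (HkN : (k <= ncells)%nat) by (apply INR_le; nra).
  exists k. unfold cell_left. split; [exact HkN|].
  split; [split; [apply Rdiv_le_iff|apply Rlt_div_iff]; lra|].
  unfold cell_width. destruct (Nat.ltb_spec k ncells).
  - replace (INR k / INR ncells + / INR ncells) with ((INR k + 1) / INR ncells) by (field; lra).
    apply Rle_div_iff; lra.
  - replace k with ncells in * by lia.
    replace (INR ncells / INR ncells) with 1 by (field; lra). lra.
Qed.

Lemma proj_En_in_pieces th y :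
  proj (En g m n) th y -> interval_union (piece_lo th) (piece_hi th) ncells y.
Proof.
  apply proj_closure2_interval_union. intros p (x & t & Hx & Ht & ->). simpl.
  destruct (cell_of_point x Hx) as [k [Hk [Hcell Hx2]]].
  exists k. split; [exact Hk|].
  rewrite (fn_eq_height k x Hcell).
  apply rect_proj_bounds; [lra|]. unfold thickness. lra.
Qed.

Lemma proj_En_of_piece_interior th k y : (k <= ncells)%nat ->
  piece_lo th k < y < piece_hi th k -> proj (En g m n) th y.
Proof.
  intros Hk Hy. pose proof ncells_pos as HN.
  destruct (rect_proj_interior _ _ _ _ th y (cell_width_nonneg k) (Rlt_le _ _ thickness_pos) Hy)
    as [x [v [Hx1 [Hx2 [Hv ->]]]]].
  pose proof (cell_left_nonneg k).
  assert (Hcell : cell_left k <= x < (INR k + 1) / INR ncells /\ x <= 1).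
  { unfold cell_width, cell_left in *. destruct (Nat.ltb_spec k ncells).
    - assert (INR k + 1 <= INR ncells) by (rewrite <- S_INR; apply le_INR; lia).
      assert ((INR k + 1) / INR ncells <= 1) by (apply Rdiv_le_iff; lra).
      replace (INR k / INR ncells + / INR ncells) with ((INR k + 1) / INR ncells) in Hx2
        by (field; lra).
      assert (0 < / INR ncells) by (apply Rinv_0_lt_compat; lra). destruct Hx2; lra.
    - replace k with ncells in * by lia.
      replace (INR ncells / INR ncells) with 1 in * by (field; lra).
      assert (1 < (INR ncells + 1) / INR ncells) by (apply Rlt_div_iff; lra).
      destruct Hx2; lra. }
  exists (x, v). split; [|reflexivity].
  intros eps Heps. exists (x, v). split.
  - exists x, (v - height k). split; [lra|]. split; [unfold thickness in Hv; lra|].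
    rewrite (fn_eq_height k x) by lra. f_equal. ring.
  - simpl. rewrite !Rminus_diag, Rabs_R0. lra.
Qed.

Lemma proj_En_coverable th : coverable (proj (En g m n) th).
Proof.
  exists (0 + sum_f_R0 (fun k => piece_hi th k - piece_lo th k) ncells).
  eapply cover_sum_subset; [|apply (cover_sum_add_interval_union _ _ _ _ _ cover_sum_empty)].
  - intros y Hy. right. apply proj_En_in_pieces, Hy.
  - intros k. apply rect_lo_le_hi.
Qed.

Definition lip_const : R := 4 + sum_f_R0 (fun i => Rabs (coef i)) (n - 1).

Lemma cell_value_bounds M e k : 0 <= cell_value M e k <= 3/4.
Proof. unfold cell_value. destruct (Nat.odd _); lra. Qed.

Lemma Rabs_height_le k : Rabs (height k) <= 1 + sum_f_R0 (fun i => Rabs (coef i)) (n - 1).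
Proof.
  unfold height. eapply Rle_trans; [apply Rabs_triang|]. apply Rplus_le_compat.
  - pose proof (cell_value_bounds (m n) 0 k). rewrite Rabs_right; lra.
  - eapply Rle_trans; [apply sum_f_R0_triangle|]. apply sum_Rle. intros i _.
    rewrite Rabs_mult. pose proof (cell_value_bounds (m n) (m (S i)) k).
    rewrite (Rabs_right (cell_value _ _ _)) by lra. pose proof (Rabs_pos (coef i)). nra.
Qed.

Lemma lip_const_nonneg : 0 <= lip_const.
Proof.
  unfold lip_const. pose proof (cond_pos_sum _ (n - 1) (fun i => Rabs_pos (coef i))). lra.
Qed.

Lemma piece_lipschitz a b k : (k <= ncells)%nat ->
  Rabs (piece_lo a k - piece_lo b k) <= lip_const * Rabs (a - b) /\
  Rabs (piece_hi a k - piece_hi b k) <= lip_const * Rabs (a - b).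
Proof.
  intros Hk. pose proof ncells_pos. pose proof ncells_ge1.
  assert (Hx : Rabs (cell_left k) <= 1).
  { rewrite Rabs_right by (apply Rle_ge, cell_left_nonneg).
    apply Rdiv_le_iff; [lra|]. rewrite Rmult_1_l. apply le_INR, Hk. }
  assert (Hw : Rabs (cell_width k) <= 1).
  { pose proof (cell_width_nonneg k). rewrite Rabs_right by lra. unfold cell_width.
    destruct (Nat.ltb _ _); [|lra]. rewrite <- Rinv_1. apply Rinv_le_contravar; lra. }
  assert (Hh : Rabs thickness <= 1).
  { pose proof thickness_pos. rewrite Rabs_right by lra. unfold thickness.
    rewrite <- Rinv_1. apply Rinv_le_contravar; [lra|]. apply pow_R1_Rle. lra. }
  pose proof (Rabs_height_le k). pose proof (Rabs_pos (a - b)).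
  unfold piece_lo, piece_hi, lip_const.
  split; (eapply Rle_trans; [apply rect_support_lipschitz;
    first [exact Rmin0_lipschitz | exact Rmax0_lipschitz]|]);
  apply Rmult_le_compat_r; lra.
Qed.

Lemma proj_length_lipschitz a b :
  Rabs (proj_length a - proj_length b) <= INR (S ncells) * 4 * lip_const * Rabs (a - b).
Proof.
  assert (Hshift : forall a b,
    proj_length a <= proj_length b + INR (S ncells) * (4 * (lip_const * Rabs (a - b)))).
  { intros a' b'. apply leb_measure_le_perturbed
      with (lo := piece_lo a') (hi := piece_hi a') (lo' := piece_lo b') (hi' := piece_hi b').
    - apply Rmult_le_pos; [exact lip_const_nonneg|apply Rabs_pos].
    - apply proj_En_in_pieces.
    - apply proj_En_of_piece_interior.
    - intros k Hk. apply piece_lipschitz, Hk.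
    - apply proj_En_coverable. }
  pose proof (Hshift a b). pose proof (Hshift b a).
  rewrite Rabs_minus_sym in H0. apply Rabs_le. lra.
Qed.

Lemma proj_length_continuous th : continuity_pt proj_length th.
Proof.
  apply lipschitz_continuity_pt with (L := INR (S ncells) * 4 * lip_const).
  - pose proof (pos_INR (S ncells)). pose proof lip_const_nonneg. apply Rmult_le_pos; lra.
  - apply proj_length_lipschitz.
Qed.

Definition piece_start (th : R) (k : nat) : R := cell_left k * cos th + height k * sin th.

Definition piece_end (th : R) (k : nat) : R :=
  (INR k + 1) / INR ncells * cos th + height k * sin th.

Lemma proj_En_of_graph_piece th k y : (k < ncells)%nat -> 0 < cos th ->
  piece_start th k <= y < piece_end th k -> proj (En g m n) th y.
Proof.
  intros Hk Hc Hy. unfold piece_start, piece_end in Hy. pose proof ncells_pos.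
  set (x := (y - height k * sin th) / cos th).
  assert (Hx : cell_left k <= x < (INR k + 1) / INR ncells).
  { unfold x, cell_left in *. split; [apply Rle_div_iff|apply Rdiv_lt_iff]; lra. }
  assert (Hx1 : (INR k + 1) / INR ncells <= 1).
  { apply Rdiv_le_iff; [lra|]. rewrite <- S_INR, Rmult_1_l. apply le_INR. lia. }
  pose proof (cell_left_nonneg k).
  exists (x, fn g m n x). split.
  - intros eps Heps. exists (x, fn g m n x). split.
    + exists x, 0. split; [lra|]. split; [split; [lra|left; apply thickness_pos]|].
      f_equal. ring.
    + simpl. rewrite !Rminus_diag, Rabs_R0. lra.
  - simpl. rewrite (fn_eq_height k x Hx). unfold x. field. lra.
Qed.

Lemma Rmax_minus_Rmin a b : Rmax a b - Rmin a b = Rabs (a - b).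
Proof. unfold Rmax, Rmin, Rabs. destruct (Rle_dec a b); destruct (Rcase_abs (a - b)); lra. Qed.

Lemma proj_length_ge_chain th K : (K < ncells)%nat -> 0 < cos th ->
  piece_end th K - piece_start th 0 -
  sum_f_R0 (fun k => Rabs (piece_end th k - piece_start th (S k))) K <= proj_length th.
Proof.
  intros HK Hc. apply leb_measure_ge; [apply proj_En_coverable|]. intros s Hs.
  set (gap_lo := fun k => Rmin (piece_end th k) (piece_start th (S k))).
  set (gap_hi := fun k => Rmax (piece_end th k) (piece_start th (S k))).
  assert (Hgaps : sum_f_R0 (fun k => gap_hi k - gap_lo k) K
                  = sum_f_R0 (fun k => Rabs (piece_end th k - piece_start th (S k))) K)
    by (apply sum_eq; intros; apply Rmax_minus_Rmin).
  pose proof (cover_sum_add_interval_union _ _ gap_lo gap_hi K Hs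
    ltac:(intro k; eapply Rle_trans; [apply Rmin_l|apply Rmax_l])) as Hcov.
  rewrite Hgaps in Hcov.
  destruct (Rle_lt_dec (piece_start th 0) (piece_end th K)) as [Hle|Hlt].
  - enough (piece_end th K - piece_start th 0 <=
            s + sum_f_R0 (fun k => Rabs (piece_end th k - piece_start th (S k))) K) by lra.
    apply interval_length_le_cover; [exact Hle|].
    eapply cover_sum_subset; [|exact Hcov]. intros y Hy.
    destruct (chain_cover (piece_start th) (piece_end th) K y Hy) as [[k [Hk H]]|H].
    + left. apply (proj_En_of_graph_piece th k); auto. lia.
    + right. exact H.
  - pose proof (cover_sum_nonneg _ _ Hs).
    pose proof (cond_pos_sum (fun k => Rabs (piece_end th k - piece_start th (S k))) K
      (fun k => Rabs_pos _)).
    lra.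
Qed.

Lemma cell_value_0 M e : cell_value M e 0 = 0.
Proof. unfold cell_value. rewrite Nat.Div0.div_0_l. reflexivity. Qed.

Lemma height_0 : height 0 = 0.
Proof.
  unfold height. rewrite cell_value_0, (sum_eq _ (fun _ => 0)), sum_cte
    by (intros; rewrite cell_value_0; ring).
  ring.
Qed.

Lemma cell_value_step M e k :
  Rabs (cell_value M e (S k) - cell_value M e k)
  <= 3/4 * (INR (S k / 4 ^ (M - e)) - INR (k / 4 ^ (M - e))).
Proof.
  set (q := (4 ^ (M - e))%nat).
  assert (Hle : (k / q <= S k / q)%nat) by (apply Nat.Div0.div_le_mono; lia).
  destruct (Nat.eq_dec (k / q) (S k / q)) as [Heq|Hne].
  - unfold cell_value. fold q. rewrite <- Heq, Rminus_diag, Rabs_R0. lra.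
  - assert (INR (k / q) + 1 <= INR (S k / q)) by (rewrite <- S_INR; apply le_INR; lia).
    pose proof (cell_value_bounds M e (S k)). pose proof (cell_value_bounds M e k).
    apply Rabs_le. lra.
Qed.

(* The value only changes when the cell index crosses a multiple of 4^(M-e). *)
Lemma cell_value_variation M e K :
  sum_f_R0 (fun k => Rabs (cell_value M e (S k) - cell_value M e k)) K
  <= 3/4 * INR (S K / 4 ^ (M - e)).
Proof.
  eapply Rle_trans; [apply sum_Rle; intros k _; apply cell_value_step|].
  rewrite (sum_eq _ (fun k => (INR (S k / 4 ^ (M - e)) - INR (k / 4 ^ (M - e))) * (3/4)))
    by (intros; ring).
  rewrite <- scal_sum, (sum_telescope (fun k => INR (k / 4 ^ (M - e)))), Nat.Div0.div_0_l.
  simpl INR. lra.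
Qed.

Lemma ncells_div e : (e <= m n)%nat -> (ncells / 4 ^ (m n - e) = 4 ^ S e)%nat.
Proof.
  intros He. unfold ncells. replace (S (m n)) with (S e + (m n - e))%nat by lia.
  rewrite Nat.pow_add_r. apply Nat.div_mul, Nat.pow_nonzero. lia.
Qed.

Hypothesis acoef_nonneg : forall i, 0 <= acoef g (S i).

Lemma coef_nonneg i : 0 <= coef i.
Proof. apply Rle_div_iff; [apply pow_lt; lra|]. rewrite Rmult_0_l. apply acoef_nonneg. Qed.

Lemma height_step_le k :
  Rabs (height (S k) - height k) <=
  Rabs (cell_value (m n) 0 (S k) - cell_value (m n) 0 k) +
  sum_f_R0 (fun i => coef i *
    Rabs (cell_value (m n) (m (S i)) (S k) - cell_value (m n) (m (S i)) k)) (n - 1).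
Proof.
  unfold height.
  replace (_ + _ - (_ + _)) with
    ((cell_value (m n) 0 (S k) - cell_value (m n) 0 k) +
     sum_f_R0 (fun i => coef i *
       (cell_value (m n) (m (S i)) (S k) - cell_value (m n) (m (S i)) k)) (n - 1)).
  2:{ rewrite (sum_eq _ (fun i => coef i * cell_value (m n) (m (S i)) (S k)
                                  - coef i * cell_value (m n) (m (S i)) k)) by (intros; ring).
      rewrite minus_sum. ring. }
  eapply Rle_trans; [apply Rabs_triang|]. apply Rplus_le_compat_l.
  eapply Rle_trans; [apply sum_f_R0_triangle|]. apply sum_Rle. intros i _.
  rewrite Rabs_mult, (Rabs_right (coef i)) by (apply Rle_ge, coef_nonneg). lra.
Qed.

(* Summand i jumps by (3/4) coef i at most 4^(m (i+1) + 1) times. *)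
Lemma height_variation_le :
  sum_f_R0 (fun k => Rabs (height (S k) - height k)) (ncells - 1)
  <= 3 + 3 * sum_f_R0 (fun i => acoef g (S i)) (n - 1).
Proof.
  assert (HK : S (ncells - 1) = ncells) by (unfold ncells; pose proof (Nat.pow_nonzero 4 (S (m n))); lia).
  eapply Rle_trans; [apply sum_Rle; intros k _; apply height_step_le|].
  rewrite sum_plus, sum_f_R0_swap. apply Rplus_le_compat.
  - eapply Rle_trans; [apply cell_value_variation|]. rewrite HK, ncells_div by lia.
    simpl. lra.
  - rewrite scal_sum. apply sum_Rle. intros i Hi.
    rewrite <- (sum_eq (fun k => Rabs (cell_value (m n) (m (S i)) (S k)
                                       - cell_value (m n) (m (S i)) k) * coef i))
      by (intros; ring).
    rewrite <- scal_sum.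
    pose proof (cell_value_variation (m n) (m (S i)) (ncells - 1)) as Hvar.
    rewrite HK, ncells_div, INR_pow4 in Hvar by (apply m_le_m_n; exact Hi).
    apply Rle_trans with (coef i * (3 / 4 * 4 ^ S (m (S i)))).
    + apply Rmult_le_compat_l; [apply coef_nonneg|exact Hvar].
    + unfold coef. simpl. right. field. apply pow_nonzero. lra.
Qed.

Lemma proj_length_ge_variation th T :
  sum_f_R0 (fun k => Rabs (height (S k) - height k)) (ncells - 1) <= T ->
  0 < cos th -> 0 <= sin th ->
  cos th - sin th * T <= proj_length th.
Proof.
  intros HT Hc Hs. pose proof ncells_pos.
  assert (HN : (1 <= ncells)%nat) by (unfold ncells; pose proof (Nat.pow_nonzero 4 (S (m n))); lia).
  pose proof (proj_length_ge_chain th (ncells - 1) ltac:(lia) Hc) as Hchain.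
  assert (Hend : piece_end th (ncells - 1) = cos th + height (ncells - 1) * sin th).
  { unfold piece_end. rewrite <- S_INR. replace (S (ncells - 1)) with ncells by lia.
    field. lra. }
  assert (Hstart : piece_start th 0 = 0).
  { unfold piece_start, cell_left. rewrite height_0. simpl. unfold Rdiv. ring. }
  assert (Hgaps : sum_f_R0 (fun k => Rabs (piece_end th k - piece_start th (S k))) (ncells - 1)
     = sin th * sum_f_R0 (fun k => Rabs (height (S k) - height k)) (ncells - 1)).
  { rewrite scal_sum. apply sum_eq. intros k _. unfold piece_start, piece_end, cell_left.
    rewrite S_INR.
    replace ((INR k + 1) / INR ncells * cos th + height k * sin th -
             ((INR k + 1) / INR ncells * cos th + height (S k) * sin th))
      with (- ((height (S k) - height k) * sin th)) by ring.
    rewrite Rabs_Ropp, Rabs_mult, (Rabs_right (sin th)) by lra. ring. }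
  rewrite Hend, Hstart, Hgaps in Hchain.
  assert (0 <= height (ncells - 1)).
  { unfold height. pose proof (cell_value_bounds (m n) 0 (ncells - 1)).
    pose proof (cond_pos_sum (fun i => coef i * cell_value (m n) (m (S i)) (ncells - 1)) (n - 1)
      (fun i => Rmult_le_pos _ _ (coef_nonneg i) (proj1 (cell_value_bounds _ _ _)))).
    lra. }
  assert (sin th * sum_f_R0 (fun k => Rabs (height (S k) - height k)) (ncells - 1) <= sin th * T)
    by (apply Rmult_le_compat_l; auto).
  nra.
Qed.

Lemma proj_length_ge_half T th :
  sum_f_R0 (fun k => Rabs (height (S k) - height k)) (ncells - 1) <= T ->
  0 < th <= 1/2 -> th * T <= 1/4 -> 1/2 <= proj_length th.
Proof.
  intros HT Hth HthT.
  destruct (small_angle_bounds th Hth) as [Hc [Hs0 Hs]].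
  pose proof (proj_length_ge_variation th T HT ltac:(lra) Hs0).
  assert (0 <= T) by (eapply Rle_trans; [|exact HT]; apply cond_pos_sum; intro; apply Rabs_pos).
  assert (sin th * T <= th * T) by (apply Rmult_le_compat_r; lra).
  lra.
Qed.

End ProjectionsOfEn.

(** * The lower bound *)

Lemma RiemannInt_ge_initial_segment (f : R -> R) a b t c (pr : Riemann_integrable f a b) :
  (forall x, continuity_pt f x) -> 0 <= t <= b - a ->
  (forall x, a <= x <= b -> 0 <= f x) -> (forall x, a < x < a + t -> c <= f x) ->
  c * t <= RiemannInt pr.
Proof.
  intros Hf Ht Hpos Hc.
  pose proof (@continuity_implies_RiemannInt f a (a + t) ltac:(lra) (fun x _ => Hf x)) as pr1.
  pose proof (@continuity_implies_RiemannInt f (a + t) b ltac:(lra) (fun x _ => Hf x)) as pr2.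
  rewrite <- (RiemannInt_P26 pr1 pr2 pr).
  pose proof (RiemannInt_P19 (RiemannInt_P14 a (a + t) c) pr1 ltac:(lra)
    (fun x Hx => Hc x Hx)) as I1.
  pose proof (RiemannInt_P19 (RiemannInt_P14 (a + t) b 0) pr2 ltac:(lra)
    (fun x Hx => Hpos x ltac:(lra))) as I2.
  rewrite !RiemannInt_P15 in I1, I2. lra.
Qed.

Lemma acoef_pos (g : nat -> R) :
  (forall k, (1 <= k)%nat -> 0 < g k) -> (forall k, (1 <= k)%nat -> g k < g (S k)) ->
  forall i, 0 < acoef g (S i).
Proof.
  intros Hpos Hinc [|i]; [apply Hpos; lia|].
  apply Rmin_glb_lt; [lra|]. pose proof (Hinc (S i) ltac:(lia)). simpl. lra.
Qed.

Lemma sum_acoef_le_succ (g : nat -> R) n : (2 <= n)%nat ->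
  sum_f_R0 (fun i => acoef g (S i)) (n - 1) <= sum_f_R0 (fun i => acoef g (S i)) (n - 2) + 1.
Proof.
  intros Hn. replace (n - 1)%nat with (S (n - 2)) by lia. rewrite tech5.
  apply Rplus_le_compat_l. apply Rmin_l.
Qed.

Lemma increasing_le (m : nat -> nat) :
  (forall k, (2 <= k)%nat -> (m (k - 1) < m k)%nat) ->
  forall j k, (1 <= j <= k)%nat -> (m j <= m k)%nat.
Proof.
  intros Hinc j k [Hj Hjk]. induction Hjk as [|k Hjk IH]; [lia|].
  pose proof (Hinc (S k) ltac:(lia)). rewrite Nat.sub_succ, Nat.sub_0_r in H. lia.
Qed.

Lemma fav_constant_le g1 s : 0 < g1 <= s ->
  1 / (16 * PI * (6 / g1 + 3)) / s <= 1 / 2 * (1 / (4 * (6 + 3 * s))) / (2 * PI).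
Proof.
  intros Hs. pose proof PI_RGT_0.
  assert (Hg : 6 <= 6 / g1 * s).
  { replace (6 / g1 * s) with (6 * s / g1) by (field; lra). apply Rle_div_iff; lra. }
  replace (1 / (16 * PI * (6 / g1 + 3)) / s) with (/ (16 * PI * (6 / g1 * s + 3 * s)))
    by (field; repeat split; nra).
  replace (1 / 2 * (1 / (4 * (6 + 3 * s))) / (2 * PI)) with (/ (16 * PI * (6 + 3 * s)))
    by (field; lra).
  apply Rinv_le_contravar; [nra|]. apply Rmult_le_compat_l; lra.
Qed.

Lemma sum_f_R0_ge_head (An : nat -> R) N : (forall i, 0 <= An i) -> An 0%nat <= sum_f_R0 An N.
Proof. intros H. induction N; simpl; [lra|]. specialize (H (S N)). lra. Qed.

Theorem proposition4 (g : nat -> R) (m : nat -> nat)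
  (Hg_pos : forall k, (1 <= k)%nat -> 0 < g k)
  (Hg_inc : forall k, (1 <= k)%nat -> g k < g (S k))
  (Hg_inf : cv_infty g)
  (Hm_pos : forall k, (1 <= k)%nat -> (1 <= m k)%nat)
  (Hm_inc : forall k, (2 <= k)%nat -> (m (k - 1) < m k)%nat)
  (Hm1 : forall k, (2 <= k)%nat -> 1000 / 4 ^ (m k) <= acoef g k / 4 ^ (m (k - 1)%nat))
  (Hm2 : forall k, (2 <= k)%nat -> 1000 / 4 ^ (m k) <= acoef g (k - 1) / 4 ^ (m (k - 1)%nat)) :
  exists c, 0 < c /\
    forall n, (2 <= n)%nat ->
      exists pr : Riemann_integrable (fun th => leb_measure (proj (En g m n) th)) 0 (2 * PI),
        RiemannInt pr / (2 * PI) >= c / sum_f_R0 (fun i => acoef g (S i)) (n - 2).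
Proof.
  pose proof (acoef_pos g Hg_pos Hg_inc) as Ha.
  assert (Ha0 : forall i, 0 <= acoef g (S i)) by (intro i; left; apply Ha).
  assert (Hg1 : 0 < g 1%nat) by exact (Ha 0%nat).
  pose proof PI_RGT_0. pose proof PI2_3_2.
  exists (1 / (16 * PI * (6 / g 1%nat + 3))).
  split; [pose proof (Rdiv_lt_0_compat 6 _ ltac:(lra) Hg1); apply Rdiv_lt_0_compat; nra|].
  intros n Hn.
  assert (Hmono : forall i, (i <= n - 1)%nat -> (m (S i) <= m n)%nat)
    by (intros i Hi; apply increasing_le; [exact Hm_inc|lia]).
  set (sa := sum_f_R0 (fun i => acoef g (S i)) (n - 2)).
  assert (Hsa : g 1%nat <= sa) by exact (sum_f_R0_ge_head _ (n - 2) Ha0).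
  assert (Hvar : sum_f_R0 (fun k => Rabs (height g m n (S k) - height g m n k)) (ncells m n - 1)
                 <= 6 + 3 * sa)
    by (pose proof (height_variation_le g m n Hmono Ha0); pose proof (sum_acoef_le_succ g n Hn) as Hsucc;
        fold sa in Hsucc; lra).
  set (t := 1 / (4 * (6 + 3 * sa))).
  assert (Ht : t * (6 + 3 * sa) = 1 / 4) by (unfold t; field; lra).
  assert (Ht' : 0 < t <= 1 / 24)
    by (split; [apply Rdiv_lt_0_compat|apply Rdiv_le_iff; rewrite ?Rdiv_1_l]; lra).
  exists (@continuity_implies_RiemannInt _ 0 (2 * PI) ltac:(lra)
            (fun x _ => proj_length_continuous g m n Hmono x)).
  apply Rle_ge. eapply Rle_trans; [apply fav_constant_le; lra|].
  apply Rmult_le_compat_r; [left; apply Rinv_0_lt_compat; lra|].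
  apply RiemannInt_ge_initial_segment.
  - exact (proj_length_continuous g m n Hmono).
  - fold t. lra.
  - intros x _. apply leb_measure_nonneg, proj_En_coverable, Hmono.
  - intros th Hth. fold t in Hth.
    apply (proj_length_ge_half g m n Hmono Ha0 (6 + 3 * sa)); [exact Hvar|lra|nra].
Qed.
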